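(* Let $\mathcal{M}_{\mathbb{P}}=(\mathcal{M},\mathbb{P})$ be an uncertain parametric MDP, $\varphi$ a specification with comparison operator $\le$, threshold $\lambda$ and associated solution function $\mathrm{sol}_{\mathcal{M}}$, and $\mathcal{U}_N$ a set of $N\ge1$ parameter instantiations sampled independently from $\mathbb{P}$. Let $\mathcal{U}_{N_\varphi}=\{u\in\mathcal{U}_N:\mathrm{sol}_{\mathcal{M}}(u)\le\lambda\}$ be the satisfying samples, $N_{\neg\varphi}=N-|\mathcal{U}_{N_\varphi}|$ the number of violating samples, and $\tau^+=\max_{u\in\mathcal{U}_{N_\varphi}}\mathrm{sol}_{\mathcal{M}}(u)$. Fix a confidence probability $\beta\in(0,1)$. Define $t^*(N)=0$, and for $k=0,\dots,N-1$ let $t^*(k)$ be the solution $t$ of \[\frac{1-\beta}{N}=\sum_{i=0}^{k}\binom{N}{i}(1-t)^i t^{N-i}.\] Then \[\mathbb{P}^N\Big\{\Pr\{u\in\mathcal{V}_{\mathcal{M}}\mid \mathrm{sol}_{\mathcal{M}}(u)\le\tau^+\}\ \ge\ t^*(N_{\neg\varphi})\Big\}\ \ge\ \beta,\] where the inner probability is with respect to $u$ drawn from $\mathbb{P}$.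
   Context: A parametric MDP is $\mathcal{M}=(S,\mathit{Act},s_I,V,\mathcal{P})$ with finite states and actions, initial state, finite parameter set $V$ and transition function $\mathcal{P}:S\times\mathit{Act}\times S\to\mathbb{Q}[V]$. Instantiations $u:V\to\mathbb{R}$ form the parameter space $\mathcal{V}_{\mathcal{M}}$; $\mathcal{M}[u]$ is the instantiated MDP, assumed well-defined and graph-preserving. An uncertain pMDP is $(\mathcal{M},\mathbb{P})$ with $\mathbb{P}$ a probability distribution on $\mathcal{V}_{\mathcal{M}}$. A specification $\varphi$ with operator $\le$ consists of a measure on MDPs (e.g. maximal reachability probability, expected reward) and a threshold $\lambda$; the solution function $\mathrm{sol}_{\mathcal{M}}:\mathcal{V}_{\mathcal{M}}\to\mathbb{R}$ maps $u$ to the value of the measure on $\mathcal{M}[u]$ (assumed measurable), and $\mathcal{M}[u]\models\varphi$ iff $\mathrm{sol}_{\mathcal{M}}(u)\le\lambda$. $\mathbb{P}^N$ is the $N$-fold product measure governing $\mathcal{U}_N$. (When $N_{\neg\varphi}=N$ the set $\mathcal{U}_{N_\varphi}$ is empty and the bound $t^*(N)=0$ holds trivially.) *)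

From HB Require Import structures.
From mathcomp Require Import all_boot all_order all_algebra.
From mathcomp Require Import all_classical all_reals all_analysis.
Set Implicit Arguments. Unset Strict Implicit. Unset Printing Implicit Defensive.
Import Order.TTheory GRing.Theory Num.Theory.
Local Open Scope classical_set_scope.
Local Open Scope ring_scope.

(* X : 'I_N -> Omega -> T is a sample of N parameter instantiations drawn
   independently from P, defined on the probability space (Omega, Q):
   each X i is measurable and for every measurable family (A i)_i,
   Q (X_0 \in A_0 /\ ... /\ X_{N-1} \in A_{N-1}) = prod_i P (A i).
   (Equivalently, the joint law of (X_0,...,X_{N-1}) is the N-fold
   product measure P^N.) *)
Definition iid_sample (R : realType) (dO dT : measure_display)
  (Omega : measurableType dO) (T : measurableType dT)
  (Q : probability Omega R) (P : probability T R) (N : nat)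
  (X : 'I_N -> Omega -> T) : Prop :=
  (forall i, measurable_fun setT (X i)) /\
  (forall A : 'I_N -> set T, (forall i, measurable (A i)) ->
     Q (\bigcap_(i in [set: 'I_N]) (X i @^-1` A i)) =
     \big[*%E/1%E]_(i < N) P (A i)).

Definition sat_idx (R : realType) (T : Type) (N : nat) (sol : T -> R)
  (lambda : R) (s : 'I_N -> T) : {set 'I_N} :=
  [set i : 'I_N | sol (s i) <= lambda].

Definition N_viol (R : realType) (T : Type) (N : nat) (sol : T -> R)
  (lambda : R) (s : 'I_N -> T) : nat :=
  (N - #|sat_idx sol lambda s|)%N.

(* tau^+ = max of sol over the satisfying samples (in the extended reals;
   -oo if there are none) *)
Definition tau_plus (R : realType) (T : Type) (N : nat) (sol : T -> R)
  (lambda : R) (s : 'I_N -> T) : \bar R :=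
  \big[maxe/-oo%E]_(i in sat_idx sol lambda s) (sol (s i))%:E.

Definition tstar_eq (R : realType) (N : nat) (beta : R) (k : nat) (t : R) : Prop :=
  (1 - beta) / N%:R =
  \sum_(i < k.+1) ('C(N, i))%:R * (1 - t) ^+ i * t ^+ (N - i).

From HB Require Import structures.
From mathcomp Require Import all_boot all_order all_algebra.
From mathcomp Require Import all_classical all_reals all_analysis.
From mathcomp Require Import measurable_realfun ring zify.
Import Order.TTheory GRing.Theory Num.Theory.
Local Open Scope classical_set_scope.
Local Open Scope ring_scope.
Set Implicit Arguments.
Unset Strict Implicit.
Unset Printing Implicit Defensive.

(* Let G be the distribution function of sol under P.  If no sample satisfies
   the specification, then N_viol = N and t*(N) = 0, so the event holds.
   Otherwise tau^+ = sol(u_i) for a satisfying sample u_i, and the event fails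
   only if all N - k satisfying samples, k = N_viol < N, fall into
   C_k = {u | G(sol u) < t*(k)}.  By the probability integral transform
   P(C_k) <= t*(k), so the probability that at least N - k of the N
   independent samples fall into C_k is at most the binomial tail at t*(k),
   which the defining equation of t*(k) makes equal to (1 - beta)/N.  A union
   bound over k < N bounds the failure probability by 1 - beta. *)

Section binomial_tail.
Variable R : realFieldType.
Implicit Types p q t : R.

Definition binom_tail (n j : nat) p : R :=
  \sum_(m < n.+1) ((j <= m)%N)%:R * 'C(n, m)%:R * p ^+ m * (1 - p) ^+ (n - m).

Lemma binom_tail0 n p : binom_tail n 0 p = 1.
Proof.
have -> : (1 : R) = (1 - p + p) ^+ n by rewrite subrK expr1n.
rewrite /binom_tail exprDn; apply: eq_bigr => i _; rewrite -mulr_natl /=; ring.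
Qed.

Lemma binom_tail0n j p : binom_tail 0 j p = (j == 0)%:R.
Proof. by rewrite /binom_tail big_ord1 /= !expr0 !mulr1 leqn0. Qed.

Lemma binom_tailSS n j p :
  binom_tail n.+1 j.+1 p = p * binom_tail n j p + (1 - p) * binom_tail n j.+1 p.
Proof.
rewrite /binom_tail big_ord_recl /= !mul0r add0r.
under eq_bigr => i _ do rewrite /bump leq0n add1n binS natrD mulrDr !mulrDl.
rewrite big_split /= addrC; congr (_ + _).
  by rewrite mulr_sumr; apply: eq_bigr => i _; rewrite subSS exprS; ring.
rewrite [RHS]mulr_sumr [RHS]big_ord_recl [LHS]big_ord_recr /=.
rewrite bin_small // mul0r !mulr0 !mul0r addr0 mulr0 add0r.
apply: eq_bigr => i _; rewrite /= /bump leq0n add1n subSS.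
by rewrite -(subnSK (ltn_ord i)) [(1 - p) ^+ (_).+1]exprS; ring.
Qed.

Lemma binom_tailS_le n j p : 0 <= p <= 1 -> binom_tail n j.+1 p <= binom_tail n j p.
Proof.
move=> /andP[p0 p1]; apply: ler_sum => m _; rewrite -!mulrA.
apply: ler_wpM2r; first by rewrite !mulr_ge0 ?exprn_ge0 ?subr_ge0.
by rewrite ler_nat; case: (ltnP j m) => // /ltnW ->.
Qed.

Lemma le_binom_tail n j p q : 0 <= p -> p <= q -> q <= 1 ->
  binom_tail n j p <= binom_tail n j q.
Proof.
elim: n j p q => [|n IH] j p q p0 pq q1; first by rewrite !binom_tail0n.
case: j => [|j]; first by rewrite !binom_tail0.
have q0 : 0 <= q by apply: le_trans pq.
have le_a := IH j p q p0 pq q1; have le_b := IH j.+1 p q p0 pq q1.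
have le_ba : binom_tail n j.+1 q <= binom_tail n j q by rewrite binom_tailS_le ?q0.
rewrite !binom_tailSS.
set a := binom_tail n j p in le_a *; set a' := binom_tail n j q in le_a le_ba *.
set b := binom_tail n j.+1 p in le_b *; set b' := binom_tail n j.+1 q in le_b le_ba *.
have -> : q * a' + (1 - q) * b' =
    p * a + (1 - p) * b + (p * (a' - a) + (1 - p) * (b' - b) + (q - p) * (a' - b')) by ring.
rewrite lerDl !addr_ge0 // mulr_ge0 // subr_ge0 //; exact: le_trans q1.
Qed.

Lemma binom_lower_tailE n k t : (k <= n)%N ->
  \sum_(i < k.+1) 'C(n, i)%:R * (1 - t) ^+ i * t ^+ (n - i) = binom_tail n (n - k) t.
Proof.
move=> kn; rewrite /binom_tail.
rewrite (big_ord_widen n.+1 (fun i => 'C(n, i)%:R * (1 - t) ^+ i * t ^+ (n - i))) //.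
rewrite big_mkcond /= (reindex_inj rev_ord_inj) /=.
apply: eq_bigr => i _; rewrite subSS.
have iN : (i <= n)%N by rewrite -ltnS ltn_ord.
rewrite bin_sub // subKn //.
have -> : (n - i < k.+1)%N = (n - k <= i)%N by apply/idP/idP; lia.
by case: (n - k <= i)%N; rewrite ?mul1r ?mul0r //; ring.
Qed.

Lemma sum_card_ge_binom_tail n j p :
  \sum_(A : {set 'I_n} | (j <= #|A|)%N) p ^+ #|A| * (1 - p) ^+ (n - #|A|) = binom_tail n j p.
Proof.
have cardA (A : {set 'I_n}) : (#|A| < n.+1)%N by rewrite ltnS -[leqRHS]card_ord max_card.
rewrite big_mkcond (partition_big (fun A : {set 'I_n} => Ordinal (cardA A)) predT) //=.
apply: eq_bigr => m _.
rewrite (eq_bigr (fun _ => ((j <= m)%N)%:R * p ^+ m * (1 - p) ^+ (n - m))); last first.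
  by move=> A /eqP <-; case: (j <= #|A|)%N; rewrite ?mul1r ?mul0r.
rewrite sumr_const -mulr_natr.
have -> : #|[pred A : {set 'I_n} | Ordinal (cardA A) == m]| = 'C(n, m).
  have := card_draws 'I_n m; rewrite card_ord => <-.
  by apply: eq_card => A; rewrite !inE -val_eqE.
ring.
Qed.

End binomial_tail.

Lemma le_measure_bigsetU d (R : realType) (T : measurableType d)
    (mu : {measure set T -> \bar R}) (I : finType) (P : pred I) (F : I -> set T) :
  (forall i, P i -> measurable (F i)) ->
  (mu (\big[setU/set0]_(i | P i) F i) <= \sum_(i | P i) mu (F i))%E.
Proof.
move=> mF.
suff [] : measurable (\big[setU/set0]_(i | P i) F i) /\
  (mu (\big[setU/set0]_(i | P i) F i) <= \sum_(i | P i) mu (F i))%E by [].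
apply: (big_rec2 (fun A s => measurable A /\ (mu A <= s)%E)); first by rewrite measure0.
move=> i A s Pi [mA muA]; split; first exact: measurableU (mF i Pi) mA.
by apply: le_trans (measureU2 _ (mF i Pi) mA) _; rewrite leeD2l.
Qed.

Lemma down_closed_exhaustion {R : realType} {L : set R} :
  (forall x y, x <= y -> L y -> L x) -> L !=set0 ->
  exists y_ : nat -> R, [/\ nondecreasing_seq y_, forall n, L (y_ n) &
    forall y, L y -> exists n, y <= y_ n].
Proof.
move=> Ldown [y0 Ly0].
have [Lub|Lunb] := pselect (has_ubound L); last first.
  exists (fun n => n%:R); split => [n m nm|n|y _]; first by rewrite ler_nat.
    have /existsNP[y /not_implyP[Ly /negP]] : ~ ubound L n%:R.
      by move=> nub; apply: Lunb; exists n%:R.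
    by rewrite -ltNge => /ltW ny; apply: Ldown ny Ly.
  exists (Num.bound `|y|); apply: le_trans (ler_norm y) _.
  exact/ltW/archi_boundP.
have Lsup : has_sup L by split => //; exists y0.
have [Ls|nLs] := pselect (L (sup L)).
  by exists (fun=> sup L); split => // y Ly; exists 0%N; apply: sup_upper_bound.
exists (fun n => sup L - n.+1%:R^-1); split => [n m nm|n|y Ly].
- by rewrite lerD2l lerN2 lef_pV2 ?posrE // ler_nat.
- have [e Le /ltW] := @sup_adherent _ L (n.+1%:R^-1) ltac:(by rewrite invr_gt0) Lsup.
  by move/Ldown; apply.
- have ys : 0 < sup L - y.
    rewrite subr_gt0 lt_neqAle sup_upper_bound // andbT.
    by apply/eqP => ys; apply: nLs; rewrite -ys.
  exists (Num.bound (sup L - y)^-1).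
  rewrite lerBrDr addrC -lerBrDr -[leRHS]invrK lef_pV2 ?posrE ?invr_gt0 //.
  by apply/ltW/(lt_trans (archi_boundP _)); rewrite ?invr_ge0 ?ltW // ltr_nat.
Qed.

Section probability_integral_transform.
Context d (R : realType) (T : measurableType d) (P : probability T R) (f : T -> R).
Hypothesis mf : measurable_fun setT f.

Definition cdfR (y : R) : R := fine (P [set u | f u <= y]).

Lemma measurable_sublevel y : measurable [set u | f u <= y].
Proof.
have -> : [set u | f u <= y] = f @^-1` `]-oo, y].
  by apply/seteqP; split => u /=; rewrite in_itv.
by rewrite -[_ @^-1` _]setTI; apply: mf.
Qed.

Lemma cdfRE y : P [set u | f u <= y] = (cdfR y)%:E.
Proof. by rewrite fineK // (fin_num_measure P _ (measurable_sublevel y)). Qed.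

Lemma cdfR_nondecreasing : {homo cdfR : y z / y <= z}.
Proof.
move=> y z yz; rewrite -lee_fin -!cdfRE.
apply: le_measure; rewrite ?inE; [exact: measurable_sublevel..|].
by move=> u /= /le_trans; apply.
Qed.

Lemma measurable_cdfR : measurable_fun setT cdfR.
Proof. exact: nondecreasing_measurable cdfR_nondecreasing. Qed.

Lemma measurable_cdfR_lt t : measurable [set u | cdfR (f u) < t].
Proof.
have -> : [set u | cdfR (f u) < t] = (cdfR \o f) @^-1` `]-oo, t[.
  by apply/seteqP; split => u /=; rewrite in_itv.
by rewrite -[_ @^-1` _]setTI; apply: (measurableT_comp measurable_cdfR mf).
Qed.

Lemma measurable_cdfR_ge t : measurable [set u | t <= cdfR (f u)].
Proof.
have -> : [set u | t <= cdfR (f u)] = (cdfR \o f) @^-1` `[t, +oo[.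
  by apply/seteqP; split => u /=; rewrite in_itv /= andbT.
by rewrite -[_ @^-1` _]setTI; apply: (measurableT_comp measurable_cdfR mf).
Qed.

Lemma probability_cdfR_lt (t : R) : 0 <= t -> (P [set u | (cdfR (f u) < t)%R] <= t%:E)%E.
Proof.
move=> t0; set L := [set y | cdfR y < t].
have -> : [set u | cdfR (f u) < t] = f @^-1` L by [].
have [[y0 Ly0]|L0] := pselect (L !=set0); last first.
  rewrite (_ : L = set0) ?preimage_set0 ?measure0 ?lee_fin //.
  by apply/seteqP; split => // y Ly; apply: L0; exists y.
have Ldown x y : x <= y -> L y -> L x by move=> /cdfR_nondecreasing/le_lt_trans; apply.
have [y_ [y_nd Ly_ y_cover]] := down_closed_exhaustion Ldown (ex_intro _ y0 Ly0).
have -> : f @^-1` L = \bigcup_n [set u | f u <= y_ n].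
  apply/seteqP; split => [u /y_cover[n]|u [n _ /= fy]]; first by exists n.
  exact: Ldown fy (Ly_ n).
apply: cvge_to_le (nondecreasing_cvg_mu _ _ _) _.
- by move=> n; apply: measurable_sublevel.
- by apply: bigcup_measurable => n _; apply: measurable_sublevel.
- by move=> n m nm; apply/subsetPset => u /= fy; apply: le_trans fy (y_nd _ _ nm).
- by near=> n; rewrite /= cdfRE lee_fin; apply/ltW/Ly_.
Unshelve. all: by end_near.
Qed.

End probability_integral_transform.

Section iid_hits.
Context (R : realType) (dO dT : measure_display) (Omega : measurableType dO)
  (T : measurableType dT) (Q : probability Omega R) (P : probability T R)
  (N : nat) (X : 'I_N -> Omega -> T).
Hypothesis iidX : iid_sample Q P X.

Definition hits (C : set T) (w : Omega) : {set 'I_N} := [set i | X i w \in C].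

Lemma measurable_sample_preimage i (B : set T) : measurable B -> measurable (X i @^-1` B).
Proof. by move=> mB; rewrite -[_ @^-1` _]setTI; apply: (proj1 iidX i). Qed.

Lemma hits_eqE C A : [set w | hits C w = A] =
  \bigcap_(i in [set: 'I_N]) X i @^-1` (if i \in A then C else ~` C).
Proof.
apply/seteqP; split => w /= => [<- i _|Aw].
  by rewrite /= inE; case: (boolP (X i w \in C)) => [/set_mem|/negP nC] // /mem_set.
apply/setP => i; rewrite inE; have /= := Aw i I.
by case: (i \in A) => [/mem_set|nC] //; apply/negP => /set_mem.
Qed.

Lemma measurable_hits_eq C A : measurable C -> measurable [set w | hits C w = A].
Proof.
move=> mC; rewrite hits_eqE; apply: fin_bigcap_measurable => [|i _].
  exact: finite_finset.
by apply: measurable_sample_preimage; case: ifP => _; [|apply: measurableC].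
Qed.

Lemma hitsE C (S : pred {set 'I_N}) :
  [set w | S (hits C w)] = \big[setU/set0]_(A | S A) [set w | hits C w = A].
Proof.
rewrite -(bigcup_pred S); apply/seteqP; split => [w Sw|w [A SA /= eA]].
  by exists (hits C w).
by rewrite /= eA.
Qed.

Lemma measurable_hits C (S : pred {set 'I_N}) :
  measurable C -> measurable [set w | S (hits C w)].
Proof.
by move=> mC; rewrite hitsE; apply: bigsetU_measurable => A _; apply: measurable_hits_eq.
Qed.

Lemma prob_hits_eq C A : measurable C ->
  Q [set w | hits C w = A] = (fine (P C) ^+ #|A| * (1 - fine (P C)) ^+ (N - #|A|))%:E.
Proof.
move=> mC; have PC : P C = (fine (P C))%:E by rewrite fineK // fin_num_measure.
rewrite hits_eqE (proj2 iidX) => [|i]; last by case: ifP => _; [|apply: measurableC].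
rewrite (eq_bigr (fun i => (if i \in A then fine (P C) else 1 - fine (P C))%:E)); last first.
  by move=> i _; case: ifP => _; rewrite ?probability_setC // PC ?EFinB.
rewrite prodEFin (bigID (mem A)) /= (eq_bigr (fun=> fine (P C))) => [|i -> //].
rewrite [X in _ * X](eq_bigr (fun=> 1 - fine (P C))) => [|i /negbTE -> //].
rewrite [X in _ * X](eq_bigl (fun i => i \in ~: A)) => [|i]; last by rewrite finset.in_setC.
have cardC : #|~: A| = (N - #|A|)%N by have := cardsC A; rewrite card_ord; lia.
by rewrite !prodr_const cardC.
Qed.

Lemma prob_hits_card_ge C j : measurable C ->
  (Q [set w | (j <= #|hits C w|)%N] <= (binom_tail N j (fine (P C)))%:E)%E.
Proof.
move=> mC; rewrite (hitsE C (fun A => j <= #|A|)%N) -sum_card_ge_binom_tail -sumEFin.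
under [X in (_ <= X)%E]eq_bigr do rewrite -prob_hits_eq //.
by apply: le_measure_bigsetU => A _; apply: measurable_hits_eq.
Qed.

End iid_hits.

Lemma tau_plus_attained (R : realType) (T : Type) (N : nat) (sol : T -> R) (lambda : R)
    (s : 'I_N -> T) :
  sat_idx sol lambda s != finset.set0 ->
  exists2 i, i \in sat_idx sol lambda s & tau_plus sol lambda s = (sol (s i))%:E.
Proof.
case/set0Pn => j jS.
have [i iS tauE] := @Order.TotalTheory.eq_bigmax _ _ _ -oo%E j (mem (sat_idx sol lambda s))
  (fun i => (sol (s i))%:E) jS (fun i _ => leNye _).
by exists i.
Qed.

Section good_event.
Context (R : realType) (dO dT : measure_display) (Omega : measurableType dO)
  (T : measurableType dT) (Q : probability Omega R) (P : probability T R)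
  (sol : T -> R) (lambda beta : R) (N : nat) (X : 'I_N -> Omega -> T) (tstar : nat -> R).
Hypotheses (msol : measurable_fun setT sol) (iidX : iid_sample Q P X) (tstarN : tstar N = 0).

Local Notation G := (cdfR P sol).

Definition good_event : set Omega := [set w : Omega |
  ((tstar (N_viol sol lambda (fun i => X i w)))%:E <=
   P [set u : T | ((sol u)%:E <= tau_plus sol lambda (fun i => X i w))%E])%E].

Lemma good_sampleP (s : 'I_N -> T) (S : {set 'I_N}) : sat_idx sol lambda s = S ->
  ((tstar (N_viol sol lambda s))%:E <= P [set u | ((sol u)%:E <= tau_plus sol lambda s)%E])%E <->
  S = finset.set0 \/ exists2 i, i \in S & tstar (N - #|S|)%N <= G (sol (s i)).
Proof.
move=> satS; rewrite /N_viol satS.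
have [->|SN0] := eqVneq S finset.set0.
  by rewrite cards0 subn0 tstarN; split => _; [left|apply: measure_ge0].
have [|i0 i0S tauE] := @tau_plus_attained _ _ _ sol lambda s; first by rewrite satS.
have -> : [set u | ((sol u)%:E <= tau_plus sol lambda s)%E] = [set u | sol u <= sol (s i0)].
  by apply/seteqP; split => u /=; rewrite tauE lee_fin.
rewrite cdfRE // lee_fin -satS; split => [ti0|[/eqP|[i iS ti]]].
- by right; exists i0.
- by rewrite satS (negbTE SN0).
- apply: le_trans ti _; apply: (cdfR_nondecreasing P msol); rewrite -lee_fin -tauE.
  exact: le_bigmax_cond.
Qed.

Lemma measurable_good_event : measurable good_event.
Proof.
pose Lam := [set u | sol u <= lambda].
have satE w : sat_idx sol lambda (fun i => X i w) = hits X Lam w.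
  by apply/setP => i; rewrite !inE; apply/idP/idP => [/mem_set|/set_mem].
have -> : good_event = [set w | hits X Lam w = finset.set0] `|`
    \big[setU/set0]_S ([set w | hits X Lam w = S] `&`
      \bigcup_(i in [set` mem S]) X i @^-1` [set u | tstar (N - #|S|)%N <= G (sol u)]).
  rewrite -(bigcup_pred predT); apply/seteqP; split => w.
    case/(good_sampleP (satE w)) => [S0|[i iS ti]]; first by left.
    by right; exists (hits X Lam w) => //; split => //; exists i.
  case=> [S0|[S _ [/= eS [i iS ti]]]]; apply/(good_sampleP (satE w)); first by left.
  by rewrite eS; right; exists i.
have mLam : measurable Lam by apply: measurable_sublevel.
have mhits S := measurable_hits_eq iidX S mLam.
apply: measurableU => //; apply: bigsetU_measurable => S _; apply: measurableI => //.
apply: fin_bigcup_measurable => [|i _]; first exact: finite_finset.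
exact/(measurable_sample_preimage iidX)/(measurable_cdfR_ge P msol).
Qed.

Hypothesis tstar_def :
  forall k, (k < N)%N -> 0 <= tstar k <= 1 /\ tstar_eq N beta k (tstar k).

Let C k := [set u | G (sol u) < tstar k].
Let mC k : measurable (C k) := measurable_cdfR_lt P msol (tstar k).

Lemma bad_event_hits :
  ~` good_event `<=` \bigcup_(k < N) [set w | (N - k <= #|hits X (C k) w|)%N].
Proof.
move=> w; set S := sat_idx sol lambda (fun i => X i w) => nGw.
have goodP := @good_sampleP (fun i => X i w) S erefl.
have SN0 : S != finset.set0 by apply/eqP => S0; apply: nGw; apply/goodP; left.
have cardS : (0 < #|S| <= N)%N by rewrite card_gt0 SN0 -[leqRHS]card_ord max_card.
have [S_gt0 S_leN] := andP cardS.
exists (N - #|S|)%N => /=; first by rewrite ltn_subrL S_gt0 (leq_trans S_gt0 S_leN).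
rewrite subKn //.
apply: subset_leq_card; apply/fintype.subsetP => i iS; rewrite inE; apply: mem_set.
by rewrite /C /= ltNge; apply/negP => ti; apply: nGw; apply/goodP; right; exists i.
Qed.

Lemma binom_tail_C_le k : (k < N)%N ->
  binom_tail N (N - k) (fine (P (C k))) <= (1 - beta) / N%:R.
Proof.
move=> kN; have [/andP[t0 t1] teq] := tstar_def kN.
rewrite /tstar_eq binom_lower_tailE in teq; last exact: ltnW.
rewrite teq; apply: le_binom_tail t1; first by rewrite fine_ge0.
have PC : P (C k) = (fine (P (C k)))%:E.
  by rewrite fineK // fin_num_measure.
by rewrite -lee_fin -PC; exact: (probability_cdfR_lt P msol t0).
Qed.

Lemma prob_bad_event : (0 < N)%N -> (Q (~` good_event) <= (1 - beta)%:E)%E.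
Proof.
move=> N0.
have mtail k : measurable [set w | (N - k <= #|hits X (C k) w|)%N].
  exact: (measurable_hits iidX (fun A => N - k <= #|A|)%N (mC k)).
apply: le_trans (le_measure _ _ _ bad_event_hits) _; rewrite ?inE.
- exact: measurableC measurable_good_event.
- by apply: fin_bigcup_measurable => // k _; apply: mtail.
rewrite bigcup_mkord; apply: le_trans (Boole_inequality Q (fun k _ => mtail k)) _.
apply: (@le_trans _ _ (\sum_(k < N) ((1 - beta) / N%:R)%:E)%E).
  apply: lee_sum => k _; apply: le_trans (prob_hits_card_ge iidX _ (mC k)) _.
  by rewrite lee_fin binom_tail_C_le.
rewrite sumEFin sumr_const card_ord -(mulr_natr ((1 - beta) / N%:R)).
by rewrite divfK // pnatr_eq0 -lt0n.
Qed.

End good_event.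

Theorem lemma2 (R : realType) (dO dT : measure_display)
  (Omega : measurableType dO) (T : measurableType dT)
  (Q : probability Omega R) (P : probability T R)
  (sol : T -> R) (lambda beta : R) (N : nat) (X : 'I_N -> Omega -> T)
  (tstar : nat -> R) :
  measurable_fun setT sol ->
  (0 < N)%N ->
  iid_sample Q P X ->
  0 < beta < 1 ->
  tstar N = 0 ->
  (forall k, (k < N)%N -> 0 <= tstar k <= 1 /\ tstar_eq N beta k (tstar k)) ->
  let E := [set w : Omega |
             ((tstar (N_viol sol lambda (fun i => X i w)))%:E <=
              P [set u : T | ((sol u)%:E <= tau_plus sol lambda (fun i => X i w))%E])%E] in
  measurable E /\ (beta%:E <= Q E)%E.
Proof.
move=> msol N0 iidX _ tstarN tstar_def E.
have mE : measurable E := measurable_good_event lambda msol iidX tstarN.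
split => //; have := prob_bad_event lambda msol iidX tstarN tstar_def N0.
by rewrite probability_setC // -(fineK (fin_num_measure Q E mE)) -EFinB !lee_fin lerD2l lerN2.
Qed.
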